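(* Let $\varphi$ and $\psi$ be metric formulas without implication. Then, in MHT, $\varphi\equiv\psi$ iff $\delta(\varphi)\equiv\delta(\psi)$.
   Context: Metric formulas over $\mathcal{A}$: $\varphi ::= p \mid \bot \mid \varphi_1\otimes\varphi_2 \mid \bullet_I\varphi \mid \varphi_1\,\mathsf{S}_I\,\varphi_2 \mid \varphi_1\,\mathsf{T}_I\,\varphi_2 \mid \bigcirc_I\varphi \mid \varphi_1\,\mathsf{U}_I\,\varphi_2 \mid \varphi_1\,\mathsf{R}_I\,\varphi_2$, $\otimes\in\{\to,\wedge,\vee\}$, $I=[m,n)$. Derived: $\top=\neg\bot$, $\blacksquare_I\varphi=\bot\,\mathsf{T}_I\,\varphi$, eventually before $=\top\,\mathsf{S}_I\,\varphi$, $\widehat{\bullet}_I\varphi=\bullet_I\varphi\vee\neg\bullet_I\top$, $\Box_I\varphi=\bot\,\mathsf{R}_I\,\varphi$, $\Diamond_I\varphi=\top\,\mathsf{U}_I\,\varphi$, $\widehat{\bigcirc}_I\varphi=\bigcirc_I\varphi\vee\neg\bigcirc_I\top$. Timed HT-trace $\mathbf{M}=(\langle\mathbf{H},\mathbf{T}\rangle,\tau)$: $H_i\subseteq T_i\subseteq\mathcal{A}$, $\tau:[0,\lambda)\to\mathbb{N}$, $\tau(0)=0$, $\tau(i)\le\tau(i+1)$. Satisfaction at $k$: $\bot$ never; $p$ iff $p\in H_k$; $\wedge,\vee$ usual; $\varphi\to\psi$ iff for both $\mathbf{M}'=\mathbf{M}$ and $\mathbf{M}'=(\langle\mathbf{T},\mathbf{T}\rangle,\tau)$,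 $\mathbf{M}',k\not\models\varphi$ or $\mathbf{M}',k\models\psi$; $\bullet_I$, $\mathsf{S}_I$, $\mathsf{T}_I$, $\bigcirc_I$, $\mathsf{U}_I$, $\mathsf{R}_I$: $\bullet_I\varphi$ iff $k>0$, $\varphi$ at $k-1$, $\tau(k)-\tau(k-1)\in I$; $\varphi\,\mathsf{S}_I\,\psi$ iff some $j\in[0,k]$ with $\tau(k)-\tau(j)\in I$, $\psi$ at $j$, $\varphi$ at all $i\in(j,k]$; $\varphi\,\mathsf{T}_I\,\psi$ iff for all such $j$, $\psi$ at $j$ or $\varphi$ at some $i\in(j,k]$; $\bigcirc_I\varphi$ iff $k+1<\lambda$, $\varphi$ at $k+1$, $\tau(k+1)-\tau(k)\in I$; $\varphi\,\mathsf{U}_I\,\psi$ iff some $j\in[k,\lambda)$ with $\tau(j)-\tau(k)\in I$, $\psi$ at $j$, $\varphi$ at all $i\in[k,j)$; $\varphi\,\mathsf{R}_I\,\psi$ iff for all such $j$, $\psi$ at $j$ or $\varphi$ at some $i\in[k,j)$. $\varphi\equiv\psi$ in MHT iff $\mathbf{M},k\models\varphi\leftrightarrow\psi$ for all timed HT-traces and all $k$. For an implication-free formula $\varphi$, $\delta(\varphi)$ replaces each connective by its dual: $\top/\bot$, $\wedge/\vee$, $\mathsf{U}_I/\mathsf{R}_I$, $\bigcirc_I/\widehat{\bigcirc}_I$, $\Box_I/\Diamond_I$, $\mathsf{S}_I/\mathsf{T}_I$, $\bullet_I/\widehat{\bullet}_I$, $\blacksquare_I$ / eventually before ($\top\,\mathsf{S}_I\,\cdot$).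 *)

From Stdlib Require Import Arith.
Set Implicit Arguments.

(* Intervals J = [m, n) with m : nat and n : nat or omega (None = omega). *)
Record interval := Intv { lo : nat; hi : option nat }.

Definition in_int (J : interval) (d : nat) : Prop :=
  lo J <= d /\ match hi J with None => True | Some n => d < n end.

(* Trace length lambda : nat or omega (None = omega); position i is in [0,lambda). *)
Definition in_trace (lam : option nat) (i : nat) : Prop :=
  match lam with None => True | Some n => i < n end.

Section Syntax.
Variable A : Type.

Inductive formula : Type :=
| Atom : A -> formula
| Bot : formula
| Impl : formula -> formula -> formula
| And : formula -> formula -> formula
| Or : formula -> formula -> formula
| Prev : interval -> formula -> formula
| Since : interval -> formula -> formula -> formula
| Trigger : interval -> formula -> formula -> formula
| Next : interval -> formula -> formula
| Until : interval -> formula -> formula -> formula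
| Release : interval -> formula -> formula -> formula.

Definition Neg (f : formula) : formula := Impl f Bot.
Definition Top : formula := Neg Bot.
Definition Iff (f g : formula) : formula := And (Impl f g) (Impl g f).
Definition WPrev (J : interval) (f : formula) : formula :=
  Or (Prev J f) (Neg (Prev J Top)).
Definition WNext (J : interval) (f : formula) : formula :=
  Or (Next J f) (Neg (Next J Top)).
Definition Always (J : interval) (f : formula) : formula := Release J Bot f.
Definition Eventually (J : interval) (f : formula) : formula := Until J Top f.
Definition AlwaysBefore (J : interval) (f : formula) : formula := Trigger J Bot f.
Definition EventuallyBefore (J : interval) (f : formula) : formula := Since J Top f.

(* Box/Diamond/AlwaysBefore/EventuallyBefore are
   expressible as R/U/T/S with Bot/Top as first argument. *)
Inductive iformula : Type :=
| IAtom : A -> iformula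
| IBot : iformula
| ITop : iformula
| IAnd : iformula -> iformula -> iformula
| IOr : iformula -> iformula -> iformula
| IPrev : interval -> iformula -> iformula
| IWPrev : interval -> iformula -> iformula
| ISince : interval -> iformula -> iformula -> iformula
| ITrigger : interval -> iformula -> iformula -> iformula
| INext : interval -> iformula -> iformula
| IWNext : interval -> iformula -> iformula
| IUntil : interval -> iformula -> iformula -> iformula
| IRelease : interval -> iformula -> iformula -> iformula.

Fixpoint emb (f : iformula) : formula :=
  match f with
  | IAtom p => Atom p
  | IBot => Bot
  | ITop => Top
  | IAnd f g => And (emb f) (emb g)
  | IOr f g => Or (emb f) (emb g)
  | IPrev J f => Prev J (emb f)
  | IWPrev J f => WPrev J (emb f)
  | ISince J f g => Since J (emb f) (emb g)
  | ITrigger J f g => Trigger J (emb f) (emb g)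
  | INext J f => Next J (emb f)
  | IWNext J f => WNext J (emb f)
  | IUntil J f g => Until J (emb f) (emb g)
  | IRelease J f g => Release J (emb f) (emb g)
  end.

Fixpoint delta (f : iformula) : iformula :=
  match f with
  | IAtom p => IAtom p
  | IBot => ITop
  | ITop => IBot
  | IAnd f g => IOr (delta f) (delta g)
  | IOr f g => IAnd (delta f) (delta g)
  | IPrev J f => IWPrev J (delta f)
  | IWPrev J f => IPrev J (delta f)
  | ISince J f g => ITrigger J (delta f) (delta g)
  | ITrigger J f g => ISince J (delta f) (delta g)
  | INext J f => IWNext J (delta f)
  | IWNext J f => INext J (delta f)
  | IUntil J f g => IRelease J (delta f) (delta g)
  | IRelease J f g => IUntil J (delta f) (delta g)
  end.

Fixpoint sat (H T : nat -> A -> Prop) (lam : option nat) (tau : nat -> nat)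
    (k : nat) (f : formula) {struct f} : Prop :=
  match f with
  | Atom p => H k p
  | Bot => False
  | Impl f1 f2 =>
      (sat H T lam tau k f1 -> sat H T lam tau k f2) /\
      (sat T T lam tau k f1 -> sat T T lam tau k f2)
  | And f1 f2 => sat H T lam tau k f1 /\ sat H T lam tau k f2
  | Or f1 f2 => sat H T lam tau k f1 \/ sat H T lam tau k f2
  | Prev J f1 =>
      0 < k /\ sat H T lam tau (k - 1) f1 /\ in_int J (tau k - tau (k - 1))
  | Since J f1 f2 =>
      exists j, j <= k /\ in_int J (tau k - tau j) /\ sat H T lam tau j f2 /\
        forall i, j < i -> i <= k -> sat H T lam tau i f1
  | Trigger J f1 f2 =>
      forall j, j <= k -> in_int J (tau k - tau j) ->
        sat H T lam tau j f2 \/ exists i, j < i /\ i <= k /\ sat H T lam tau i f1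
  | Next J f1 =>
      in_trace lam (k + 1) /\ sat H T lam tau (k + 1) f1 /\
      in_int J (tau (k + 1) - tau k)
  | Until J f1 f2 =>
      exists j, k <= j /\ in_trace lam j /\ in_int J (tau j - tau k) /\
        sat H T lam tau j f2 /\ forall i, k <= i -> i < j -> sat H T lam tau i f1
  | Release J f1 f2 =>
      forall j, k <= j -> in_trace lam j -> in_int J (tau j - tau k) ->
        sat H T lam tau j f2 \/ exists i, k <= i /\ i < j /\ sat H T lam tau i f1
  end.

Record htrace := HTrace {
  trH : nat -> A -> Prop;
  trT : nat -> A -> Prop;
  trlam : option nat;
  trtau : nat -> nat;
  tr_nonempty : in_trace trlam 0;
  tr_HT : forall i p, in_trace trlam i -> trH i p -> trT i p;
  tr_tau0 : trtau 0 = 0;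
  tr_mono : forall i, in_trace trlam (i + 1) -> trtau i <= trtau (i + 1)
}.

Definition msat (M : htrace) (k : nat) (f : formula) : Prop :=
  sat (trH M) (trT M) (trlam M) (trtau M) k f.

Definition mht_equiv (f g : formula) : Prop :=
  forall (M : htrace) (k : nat), in_trace (trlam M) k -> msat M k (Iff f g).

End Syntax.

(* The here-component is the only one an implication-free formula really
   inspects (the there-component enters only through the weak operators, in
   the form of the subformula [Top], which holds everywhere).  Since the pair
   <T, T> is itself a timed HT-trace, MHT equivalence is just pointwise
   equivalence on all traces.  Classically, every connective is the De Morgan
   dual of its delta-image, so delta(phi) holds at H exactly when phi fails at
   the complement of H, and that complement again yields a trace.  Hence delta
   preserves equivalence, and since delta is an involution it also reflects it. *)
From Stdlib Require Import Classical Setoid.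
Set Implicit Arguments.

Lemma not_exists_iff (T : Type) (P : T -> Prop) : ~ (exists x, P x) <-> forall x, ~ P x.
Proof. firstorder. Qed.

Lemma not_forall_iff (T : Type) (P : T -> Prop) : ~ (forall x, P x) <-> exists x, ~ P x.
Proof. split; [apply not_all_ex_not | firstorder]. Qed.

Lemma not_and_iff (P Q : Prop) : ~ (P /\ Q) <-> (P -> ~ Q).
Proof. tauto. Qed.

Lemma not_imp_iff (P Q : Prop) : ~ (P -> Q) <-> P /\ ~ Q.
Proof. split; [apply imply_to_and | tauto]. Qed.

Lemma not_or_iff (P Q : Prop) : ~ (P \/ Q) <-> ~ P /\ ~ Q.
Proof. tauto. Qed.

Lemma or_not_l_iff (P Q : Prop) : ~ P \/ Q <-> (P -> Q).
Proof. split; [apply or_to_imply | apply imply_to_or]. Qed.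

(* [not_imp_iff] must be tried before [not_forall_iff], which would also
   match a negated implication. *)
Ltac push_not :=
  repeat (setoid_rewrite not_exists_iff || setoid_rewrite not_imp_iff
          || setoid_rewrite not_forall_iff || setoid_rewrite not_and_iff
          || setoid_rewrite not_or_iff || setoid_rewrite or_not_l_iff).

Section Duality.
Variable A : Type.

Lemma delta_involutive (f : iformula A) : delta (delta f) = f.
Proof. induction f; simpl; congruence. Qed.

Lemma sat_emb_delta (X T T' : nat -> A -> Prop) lam tau (f : iformula A) :
  forall k, sat X T lam tau k (emb (delta f)) <->
            ~ sat (fun i p => ~ X i p) T' lam tau k (emb f).
Proof.
  induction f as [p| | |f1 IH1 f2 IH2|f1 IH1 f2 IH2|J f IH|J f IH
                 |J f1 IH1 f2 IH2|J f1 IH1 f2 IH2|J f IH|J f IH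
                 |J f1 IH1 f2 IH2|J f1 IH1 f2 IH2];
    intro k; cbn [delta emb sat WPrev WNext Top Neg];
    try setoid_rewrite IH; try setoid_rewrite IH1; try setoid_rewrite IH2.
  - split; [tauto | apply NNPP].
  - tauto.
  - tauto.
  - split; [tauto | apply not_and_or].
  - tauto.
  - destruct (classic (0 < k /\ in_int J (tau k - tau (k - 1)))); tauto.
  - destruct (classic (0 < k /\ in_int J (tau k - tau (k - 1)))); tauto.
  - push_not; reflexivity.
  - push_not; reflexivity.
  - destruct (classic (in_trace lam (k + 1) /\ in_int J (tau (k + 1) - tau k))); tauto.
  - destruct (classic (in_trace lam (k + 1) /\ in_int J (tau (k + 1) - tau k))); tauto.
  - push_not; reflexivity.
  - push_not; reflexivity.
Qed.

Definition total_trace (X : nat -> A -> Prop) (M : htrace A) : htrace A :=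
  @HTrace A X X (trlam M) (trtau M) (tr_nonempty M) (fun i p _ h => h)
    (tr_tau0 M) (tr_mono M).

Definition pointwise_equiv (f g : formula A) : Prop :=
  forall (M : htrace A) k, in_trace (trlam M) k -> (msat M k f <-> msat M k g).

Lemma mht_equiv_pointwise (f g : formula A) :
  mht_equiv f g <-> pointwise_equiv f g.
Proof.
  split.
  - intros Hfg M k Hk. destruct (Hfg M k Hk) as [[Hf _] [Hg _]]. tauto.
  - intros Hfg M k Hk.
    pose proof (Hfg M k Hk) as HM.
    pose proof (Hfg (total_trace (trT M) M) k Hk) as HT.
    unfold msat in *; simpl in *. tauto.
Qed.

Lemma pointwise_equiv_delta (f g : iformula A) :
  pointwise_equiv (emb f) (emb g) ->
  pointwise_equiv (emb (delta f)) (emb (delta g)).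
Proof.
  intros Hfg M k Hk. unfold msat.
  set (Hc := fun i p => ~ trH M i p).
  rewrite !(sat_emb_delta _ _ Hc).
  exact (not_iff_compat (Hfg (total_trace Hc M) k Hk)).
Qed.

End Duality.

Theorem corollary3 (A : Type) (phi psi : iformula A) :
  mht_equiv (emb phi) (emb psi) <->
  mht_equiv (emb (delta phi)) (emb (delta psi)).
Proof.
  rewrite !mht_equiv_pointwise.
  split; [apply pointwise_equiv_delta |].
  intros Hdelta.
  rewrite <- (delta_involutive phi), <- (delta_involutive psi).
  apply pointwise_equiv_delta, Hdelta.
Qed.
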